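(* Let $(A,\Delta)$ and $(B,\Delta)$ be regular multiplier Hopf algebras forming a non-degenerate dual pair, and let $A$ act on $B$ by $a\triangleright b=\sum\langle a,b_{(2)}\rangle b_{(1)}$, with this action extended to $M(B)$. If $m\in M(B)$ is a fixed point, i.e. $a\triangleright m=\varepsilon(a)m$ for all $a\in A$, then $m$ is a scalar multiple of the identity $1\in M(B)$.
   Context: Algebras are over $\mathbb C$, possibly without identity, with non-degenerate product; $M(\cdot)$ is the multiplier algebra. A regular multiplier Hopf algebra is a pair $(A,\Delta)$ with $\Delta:A\to M(A\otimes A)$ a coassociative homomorphism such that $\Delta(a)(1\otimes b),(a\otimes 1)\Delta(b),\Delta(a)(b\otimes 1),(1\otimes a)\Delta(b)\in A\otimes A$, the maps $a\otimes b\mapsto\Delta(a)(1\otimes b)$, $a\otimes b\mapsto(a\otimes 1)\Delta(b)$ are bijective, and likewise for the flipped comultiplication; it has counit $\varepsilon$ and bijective antipode $S$; Sweedler notation is used with legs covered. A non-degenerate dual pair: a non-degenerate bilinear form $\langle\cdot,\cdot\rangle:A\times B\to\mathbb C$ such that for all $a\in A,b\in B$ the multipliers $b\triangleright a=\sum\langle a_{(2)},b\rangle a_{(1)}$ and $a\triangleleft b=\sum\langle a_{(1)},b\rangle a_{(2)}$ lie in $A$, $a\triangleright b=\sum\langle a,b_{(2)}\rangle b_{(1)}$ and $b\triangleleft a=\sum\langle a,b_{(1)}\rangle b_{(2)}$ lie in $B$, with $\langle b\triangleright a,b'\rangle=\langle a,b'b\rangle$, $\langle a\triangleleft b,b'\rangle=\langle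 a,bb'\rangle$, $\langle a',a\triangleright b\rangle=\langle a'a,b\rangle$, $\langle a',b\triangleleft a\rangle=\langle aa',b\rangle$, and these four actions are unital. With $a\triangleright b$, $B$ is a left $A$-module algebra, and the action is extended to $M(B)$ by letting $a\triangleright m\in M(B)$ be the multiplier with $(a\triangleright m)b=\sum a_{(1)}\triangleright(m(S(a_{(2)})\triangleright b))$ and $b(a\triangleright m)=\sum a_{(2)}\triangleright((S^{-1}(a_{(1)})\triangleright b)m)$ for $b\in B$. *)

(* Regular multiplier Hopf algebras (van Daele) over a field,
   with the algebraic tensor product A (x) A modelled as finite formal sums
   (seq of pairs) modulo the standard tensor-product equivalence (equal
   evaluation on every bilinear form), and multipliers modelled as pairs of
   left/right actions. *)
From HB Require Import structures.
From mathcomp Require Import all_boot all_order all_algebra.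
From mathcomp Require Import reals complex.

Set Implicit Arguments.
Unset Strict Implicit.
Unset Printing Implicit Defensive.

Import GRing.Theory.
Local Open Scope ring_scope.

Section MHA.
Variable F : fieldType.

Record nualg := NUAlg {
  nua_car :> lmodType F;
  nua_mul : nua_car -> nua_car -> nua_car;
  nua_mulDl : forall (k : F) x y z,
     nua_mul (k *: x + y) z = k *: nua_mul x z + nua_mul y z;
  nua_mulDr : forall (k : F) x y z,
     nua_mul z (k *: x + y) = k *: nua_mul z x + nua_mul z y;
  nua_mulA : forall x y z, nua_mul x (nua_mul y z) = nua_mul (nua_mul x y) z;
  nua_ndl : forall a, (forall x, nua_mul x a = 0) -> a = 0;
  nua_ndr : forall a, (forall x, nua_mul a x = 0) -> a = 0 }.
Arguments nua_mul : clear implicits.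

(* the multiplier algebra M(A): pairs (left action m b, right action b m)
   with  x (m y) = (x m) y *)
Record mult (A : nualg) := Mult {
  mL : A -> A;
  mR : A -> A;
  mLR : forall x y, nua_mul A x (mL y) = nua_mul A (mR x) y }.

Section Tensor.
Variable A : nualg.
Local Notation mul := (nua_mul A).

Definition tens := seq (A * A)%type.
Definition tens3 := seq (A * A * A)%type.

Definition bilin_form (f : A -> A -> F) := forall (k : F) x y z,
  f (k *: x + y) z = k * f x z + f y z /\ f z (k *: x + y) = k * f z x + f z y.
Definition trilin_form (f : A -> A -> A -> F) := forall (k : F) x y z w,
  [/\ f (k *: x + y) z w = k * f x z w + f y z w,
      f z (k *: x + y) w = k * f z x w + f z y w &
      f z w (k *: x + y) = k * f z w x + f z w y].

Definition teq (s t : tens) := forall f, bilin_form f ->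
  \sum_(p <- s) f p.1 p.2 = \sum_(p <- t) f p.1 p.2.
Definition teq3 (s t : tens3) := forall f, trilin_form f ->
  \sum_(p <- s) f p.1.1 p.1.2 p.2 = \sum_(p <- t) f p.1.1 p.1.2 p.2.

Definition tmul (s t : tens) : tens :=
  [seq (mul p.1 q.1, mul p.2 q.2) | p <- s, q <- t].
Definition tscale (k : F) (s : tens) : tens := [seq (k *: p.1, p.2) | p <- s].
Definition tflip (s : tens) : tens := [seq (p.2, p.1) | p <- s].

Record mult2 := Mult2 { ml2 : tens -> tens; mr2 : tens -> tens }.
Definition is_mult2 (m : mult2) :=
  forall x y, teq (tmul x (ml2 m y)) (tmul (mr2 m x) y).
Definition meq2 (m n : mult2) :=
  forall x, teq (ml2 m x) (ml2 n x) /\ teq (mr2 m x) (mr2 n x).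
Definition mcomp (m n : mult2) := Mult2 (ml2 m \o ml2 n) (mr2 n \o mr2 m).
Definition melt (t : tens) := Mult2 (tmul t) (tmul^~ t).
Definition m1x (b : A) := Mult2 (map (fun p => (p.1, mul b p.2)))
                                (map (fun p => (p.1, mul p.2 b))).
Definition mx1 (b : A) := Mult2 (map (fun p => (mul b p.1, p.2)))
                                (map (fun p => (mul p.1 b, p.2))).
Definition msum (ms : seq mult2) :=
  Mult2 (fun x => flatten [seq ml2 m x | m <- ms])
        (fun x => flatten [seq mr2 m x | m <- ms]).
Definition in_tens (m : mult2) := exists t, meq2 m (melt t).
Definition mflip (m : mult2) :=
  Mult2 (tflip \o ml2 m \o tflip) (tflip \o mr2 m \o tflip).

Definition comult_hom (D : A -> mult2) :=
  [/\ forall a, is_mult2 (D a),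
      forall (k : F) a b x,
        teq (ml2 (D (k *: a + b)) x) (tscale k (ml2 (D a) x) ++ ml2 (D b) x) /\
        teq (mr2 (D (k *: a + b)) x) (tscale k (mr2 (D a) x) ++ mr2 (D b) x) &
      forall a b, meq2 (D (mul a b)) (mcomp (D a) (D b))].

Definition T1 (D : A -> mult2) (s : tens) :=
  msum [seq mcomp (D p.1) (m1x p.2) | p <- s].
Definition T2 (D : A -> mult2) (s : tens) :=
  msum [seq mcomp (mx1 p.1) (D p.2) | p <- s].

(* T : A (x) A -> A (x) A is bijective (T already known to land in A (x) A) *)
Definition tens_bij (T : tens -> mult2) :=
  (forall s s', meq2 (T s) (T s') -> teq s s') /\
  (forall t, exists s, meq2 (T s) (melt t)).

Definition mha_cond (D : A -> mult2) :=
  [/\ forall a b, in_tens (mcomp (D a) (m1x b)),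
      forall a b, in_tens (mcomp (mx1 a) (D b)),
      tens_bij (T1 D) & tens_bij (T2 D)].

(* coassociativity, legs covered:
   (a (x) 1 (x) 1)(D (x) i)(D(b)(1 (x) c)) = (i (x) D)((a (x) 1)D(b))(1 (x) 1 (x) c) *)
Definition coassoc (D : A -> mult2) :=
  forall a b c (t t' : tens) (f g : A -> tens),
    meq2 (mcomp (D b) (m1x c)) (melt t) ->
    (forall x, meq2 (mcomp (mx1 a) (D x)) (melt (f x))) ->
    meq2 (mcomp (mx1 a) (D b)) (melt t') ->
    (forall x, meq2 (mcomp (D x) (m1x c)) (melt (g x))) ->
    teq3 (flatten [seq [seq (u.1, u.2, p.2) | u <- f p.1] | p <- t])
         (flatten [seq [seq (p.1, u.1, u.2) | u <- g p.2] | p <- t']).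

Definition is_counit (D : A -> mult2) (eps : A -> F) :=
  [/\ forall (k : F) a b, eps (k *: a + b) = k * eps a + eps b,
      forall a b, eps (mul a b) = eps a * eps b,
      forall a b t, meq2 (mcomp (D a) (m1x b)) (melt t) ->
        \sum_(p <- t) eps p.1 *: p.2 = mul a b &
      forall a b t, meq2 (mcomp (mx1 a) (D b)) (melt t) ->
        \sum_(p <- t) eps p.2 *: p.1 = mul a b].

Definition is_antipode (D : A -> mult2) (eps : A -> F) (S : A -> A) :=
  [/\ forall (k : F) a b, S (k *: a + b) = k *: S a + S b,
      forall a b t, meq2 (mcomp (D a) (m1x b)) (melt t) ->
        \sum_(p <- t) mul (S p.1) p.2 = eps a *: b &
      forall a b t, meq2 (mcomp (mx1 b) (D a)) (melt t) ->
        \sum_(p <- t) mul p.1 (S p.2) = eps a *: b].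

End Tensor.

Record rmha := RMHA {
  rmha_alg :> nualg;
  Delta : rmha_alg -> mult2 rmha_alg;
  counit : rmha_alg -> F;
  antipode : rmha_alg -> rmha_alg;
  antipode_inv : rmha_alg -> rmha_alg;
  rmha_hom : comult_hom Delta;
  rmha_coassoc : coassoc Delta;
  rmha_cond : mha_cond Delta;
  rmha_cond_op : mha_cond (fun a => mflip (Delta a));
  rmha_counit : is_counit Delta counit;
  rmha_antipode : is_antipode Delta counit antipode;
  rmha_SK : cancel antipode antipode_inv;
  rmha_KS : cancel antipode_inv antipode }.
Arguments counit : clear implicits.
Arguments antipode : clear implicits.
Arguments antipode_inv : clear implicits.

(* non-degenerate dual pair, with the four actions
     actBA b a = b |> a = sum <a(2),b> a(1)      (in A)
     actAB' a b = a <| b = sum <a(1),b> a(2)     (in A)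
     actAB a b = a |> b = sum <a,b(2)> b(1)      (in B)
     actBA' b a = b <| a = sum <a,b(1)> b(2)     (in B)
   each characterised as the corresponding multiplier (legs covered). *)
Record dual_pair (A B : rmha) := DualPair {
  pairing : A -> B -> F;
  actBA : B -> A -> A;
  actAB' : A -> B -> A;
  actAB : A -> B -> B;
  actBA' : B -> A -> B;
  dp_bilin : forall (k : F) a a' b b',
     pairing (k *: a + a') b = k * pairing a b + pairing a' b /\
     pairing a (k *: b + b') = k * pairing a b + pairing a b';
  dp_nondeg_l : forall a, (forall b, pairing a b = 0) -> a = 0;
  dp_nondeg_r : forall b, (forall a, pairing a b = 0) -> b = 0;
  dp_actBA : forall b a c t,
     (meq2 (mcomp (Delta a) (mx1 c)) (melt t) ->
       nua_mul A (actBA b a) c = \sum_(p <- t) pairing p.2 b *: p.1) /\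
     (meq2 (mcomp (mx1 c) (Delta a)) (melt t) ->
       nua_mul A c (actBA b a) = \sum_(p <- t) pairing p.2 b *: p.1);
  dp_actAB' : forall a b c t,
     (meq2 (mcomp (Delta a) (m1x c)) (melt t) ->
       nua_mul A (actAB' a b) c = \sum_(p <- t) pairing p.1 b *: p.2) /\
     (meq2 (mcomp (m1x c) (Delta a)) (melt t) ->
       nua_mul A c (actAB' a b) = \sum_(p <- t) pairing p.1 b *: p.2);
  dp_actAB : forall a b c t,
     (meq2 (mcomp (Delta b) (mx1 c)) (melt t) ->
       nua_mul B (actAB a b) c = \sum_(p <- t) pairing a p.2 *: p.1) /\
     (meq2 (mcomp (mx1 c) (Delta b)) (melt t) ->
       nua_mul B c (actAB a b) = \sum_(p <- t) pairing a p.2 *: p.1);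
  dp_actBA' : forall a b c t,
     (meq2 (mcomp (Delta b) (m1x c)) (melt t) ->
       nua_mul B (actBA' b a) c = \sum_(p <- t) pairing a p.1 *: p.2) /\
     (meq2 (mcomp (m1x c) (Delta b)) (melt t) ->
       nua_mul B c (actBA' b a) = \sum_(p <- t) pairing a p.1 *: p.2);
  dp_adj : forall a a' b b',
     [/\ pairing (actBA b a) b' = pairing a (nua_mul B b' b),
         pairing (actAB' a b) b' = pairing a (nua_mul B b b'),
         pairing a' (actAB a b) = pairing (nua_mul A a' a) b &
         pairing a' (actBA' b a) = pairing (nua_mul A a a') b];
  dp_unital :
     [/\ forall a, exists s : seq (B * A), a = \sum_(p <- s) actBA p.1 p.2,
         forall a, exists s : seq (A * B), a = \sum_(p <- s) actAB' p.1 p.2,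
         forall b, exists s : seq (A * B), b = \sum_(p <- s) actAB p.1 p.2 &
         forall b, exists s : seq (B * A), b = \sum_(p <- s) actBA' p.1 p.2] }.

(* The extension of the action  a |> b  to M(B):  (nL, nR) are the left and
   right actions of the multiplier  a |> m, i.e. for every b in B
     (a |> m) b = sum a(1) |> (m (S(a(2)) |> b)),
     b (a |> m) = sum a(2) |> ((S^-1(a(1)) |> b) m),
   with the legs covered by writing b = sum_k c_k |> b_k (unitality) and using
     sum a(1) (x) S^-1(c) a(2)  = (1 (x) S^-1(c)) D(a),
     sum S(c) a(1) (x) a(2)     = (S(c) (x) 1) D(a). *)
Definition is_act_mult (A B : rmha) (P : dual_pair A B) (a : A) (m : mult B)
    (nL nR : B -> B) :=
  (forall (s : seq (A * B)) (g : A -> tens A) (b : B),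
     b = \sum_(p <- s) actAB P p.1 p.2 ->
     (forall c, meq2 (mcomp (m1x (antipode_inv A c)) (Delta a)) (melt (g c))) ->
     nL b = \sum_(p <- s) \sum_(q <- g p.1)
              actAB P q.1 (mL m (actAB P (antipode A q.2) p.2))) /\
  (forall (s : seq (A * B)) (g : A -> tens A) (b : B),
     b = \sum_(p <- s) actAB P p.1 p.2 ->
     (forall c, meq2 (mcomp (mx1 (antipode A c)) (Delta a)) (melt (g c))) ->
     nR b = \sum_(p <- s) \sum_(q <- g p.1)
              actAB P q.2 (mR m (actAB P (antipode_inv A q.1) p.2))).

Definition fixed_point (A B : rmha) (P : dual_pair A B) (m : mult B) :=
  forall a : A, is_act_mult P a m (fun b => counit A a *: mL m b)
                                  (fun b => counit A a *: mR m b).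

End MHA.

From mathcomp Require Import all_boot all_order all_algebra.
From mathcomp Require Import reals complex.
From HB Require Import structures.
From Stdlib Require Import Classical ClassicalEpsilon.

(* The multiplier m commutes with the action: m(u |> y) = u |> m y.  Indeed,
   the fixed-point identity at a, evaluated at S(z) |> b, reads
     eps(a) m(S(z) |> b) = sum q1 |> m(S(q2) |> b)  for (1 (x) z)Delta(a) = sum q1 (x) q2;
   summing it over a decomposition u (x) w = sum_i (1 (x) z_i)Delta(a_i) and using
   sum q1 S(q2) = eps(a) S(z) gives m((u S(w)) |> b) = u |> m(S(w) |> b), and S is
   bijective and the action unital.  Now pick c with eps(c) = 1 (if eps = 0 then
   B = 0).  Since eps(c (a |> x)) = eps(c) <a, x>, commutation gives
     <a, m y> = eps(c m(a |> y)) = eps(c m) <a, y>,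
   so m = eps(c m) 1 by non-degeneracy of the pairing. *)

Set Implicit Arguments.
Unset Strict Implicit.
Unset Printing Implicit Defensive.

Import GRing.Theory.
Local Open Scope ring_scope.

Section LinearMaps.
Variables (F : fieldType) (U V : lmodType F).

Definition linear_of (f : U -> V) (f_lin : linear f) : {linear U -> V} :=
  HB.pack f (GRing.isLinear.Build F U V *:%R f f_lin).

Definition scalar_of (f : U -> F) (f_lin : scalar f) : {scalar U} :=
  HB.pack f (GRing.isLinear.Build F U F^o *%R f f_lin).

Section Linear.
Variables (f : U -> V) (f_lin : linear f).

Lemma linN x : f (- x) = - f x. Proof. exact: (raddfN (linear_of f_lin) x). Qed.
Lemma linB x y : f (x - y) = f x - f y. Proof. exact: (raddfB (linear_of f_lin) x y). Qed.
Lemma linZ k x : f (k *: x) = k *: f x. Proof. exact: (linearZZ (linear_of f_lin) k x). Qed.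
Lemma lin_sum I (r : seq I) (P : pred I) (G : I -> U) :
  f (\sum_(i <- r | P i) G i) = \sum_(i <- r | P i) f (G i).
Proof. exact: (raddf_sum (linear_of f_lin)). Qed.

End Linear.

Section Scalar.
Variables (f : U -> F) (f_lin : scalar f).

Lemma scal0 : f 0 = 0. Proof. exact: (raddf0 (scalar_of f_lin)). Qed.
Lemma scalB x y : f (x - y) = f x - f y. Proof. exact: (raddfB (scalar_of f_lin) x y). Qed.
Lemma scalZ k x : f (k *: x) = k * f x. Proof. exact: (scalarZ (scalar_of f_lin) k x). Qed.
Lemma scal_sum I (r : seq I) (P : pred I) (G : I -> U) :
  f (\sum_(i <- r | P i) G i) = \sum_(i <- r | P i) f (G i).
Proof. exact: (raddf_sum (scalar_of f_lin)). Qed.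

End Scalar.
End LinearMaps.

Section LinearAlgebra.
Variables (F : fieldType) (U V W : lmodType F).

Lemma linear_comp (g : V -> W) (h : U -> V) :
  linear g -> linear h -> linear (g \o h).
Proof. by move=> g_lin h_lin k x y /=; rewrite h_lin g_lin. Qed.

Lemma scaler_linear (k : F) : linear (fun v : V => k *: v).
Proof. by move=> a x y; rewrite scalerDr !scalerA mulrC. Qed.

Lemma scalar_scale_linear (g : U -> F) (v : V) :
  scalar g -> linear (fun u => g u *: v).
Proof. by move=> g_lin a x y; rewrite g_lin scalerDl scalerA. Qed.

Lemma sum_bilinear_shift (Z : lmodType F) (Phi : U -> V -> Z)
    (lam : U -> F) (x : U) (t : seq (U * V)) :
  (forall v, linear (Phi ^~ v)) -> (forall u, linear (Phi u)) ->
  Phi x (- \sum_(p <- t) lam p.1 *: p.2) + \sum_(p <- t) Phi p.1 p.2 =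
  \sum_(p <- t) Phi (p.1 - lam p.1 *: x) p.2.
Proof.
move=> Phi_l Phi_r; rewrite (linN (Phi_r x)) (lin_sum (Phi_r x)) -sumrN -big_split.
apply: eq_bigr => p _ /=.
by rewrite (linB (Phi_l p.2)) !(linZ (Phi_l p.2)) (linZ (Phi_r x)) addrC.
Qed.

Section TensorSlices.
Variable pr : U -> W -> F.
Hypothesis pr_lin : forall w, scalar (pr ^~ w).
Hypothesis pr_sep : forall u, (forall w, pr u w = 0) -> u = 0.

(* Gaussian elimination on the first legs: a nonzero first leg x is
   detected by some w0, and subtracting multiples of x from the other first
   legs absorbs the term with first leg x. *)
Lemma bilinear_sum_eq0 (t : seq (U * V)) :
  (forall w, \sum_(p <- t) pr p.1 w *: p.2 = 0) ->
  forall f : U -> V -> F, bilinear_for *%R *%R f -> \sum_(p <- t) f p.1 p.2 = 0.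
Proof.
move: (leqnn (size t)); move: {2}(size t) => n.
elim: n t => [|n IH] [|[x y] t] //= size_t slices_t f [f_l f_r];
  rewrite ?big_nil // big_cons /=.
have slice_cons w : pr x w *: y + \sum_(p <- t) pr p.1 w *: p.2 = 0.
  by have := slices_t w; rewrite big_cons.
case: (classic (exists w0, pr x w0 != 0)) => [[w0 xw0]|none]; last first.
  have x0 : x = 0.
    by apply: pr_sep => w; apply/eqP/negPn/negP => xw; apply: none; exists w.
  rewrite x0 (scal0 (f_l y)) add0r; apply: IH => // w.
  by have := slice_cons w; rewrite x0 (scal0 (pr_lin w)) scale0r add0r.
pose lam u := pr u w0 / pr x w0.
have ey : y = - \sum_(p <- t) lam p.1 *: p.2.
  apply: (scalerI xw0); move/eqP: (slice_cons w0); rewrite addr_eq0 => /eqP ->.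
  rewrite scalerN scaler_sumr; congr (- _); apply: eq_bigr => p _.
  by rewrite scalerA /lam mulrCA divff ?mulr1.
have shift (Z : lmodType F) (Phi : U -> V -> Z) :
    (forall v, linear (Phi ^~ v)) -> (forall u, linear (Phi u)) ->
    Phi x y + \sum_(p <- t) Phi p.1 p.2 =
    \sum_(p <- [seq (p.1 - lam p.1 *: x, p.2) | p <- t]) Phi p.1 p.2.
  by move=> Phi_l Phi_r; rewrite big_map ey sum_bilinear_shift.
rewrite (shift F^o f f_l f_r); apply: IH; [by rewrite size_map | move=> w | by split].
rewrite -(shift V (fun u v => pr u w *: v)) ?slice_cons // => [v | u].
  exact: scalar_scale_linear.
exact: scaler_linear.
Qed.

End TensorSlices.
End LinearAlgebra.

(* For a dual pair, B is such a space for A and A is one for B; it is what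
   makes products in X (x) X cancellable (teq_tmul_cancelr, teq_tmul_cancell). *)
Record dual_space (F : fieldType) (X : nualg F) := DualSpace {
  ds_car : lmodType F;
  ds_pair : X -> ds_car -> F;
  ds_actR : X -> ds_car -> ds_car;
  ds_actL : X -> ds_car -> ds_car;
  ds_pair_linl : forall w, scalar (ds_pair ^~ w);
  ds_pair_linr : forall x, scalar (ds_pair x);
  ds_pair_sep : forall x, (forall w, ds_pair x w = 0) -> x = 0;
  ds_pairMr : forall x x' w, ds_pair (nua_mul x x') w = ds_pair x (ds_actR x' w);
  ds_pairMl : forall x x' w, ds_pair (nua_mul x' x) w = ds_pair x (ds_actL x' w);
  ds_actR_unital : forall w,
    exists s : seq (X * ds_car), w = \sum_(p <- s) ds_actR p.1 p.2;
  ds_actL_unital : forall w,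
    exists s : seq (X * ds_car), w = \sum_(p <- s) ds_actL p.1 p.2 }.

Arguments ds_pair {F X} d _ _.
Arguments ds_actR {F X} d _ _.
Arguments ds_actL {F X} d _ _.
Arguments ds_pair_linl {F X} d _.
Arguments ds_pair_linr {F X} d _.
Arguments ds_pair_sep {F X} d _.
Arguments ds_pairMr {F X} d _ _ _.
Arguments ds_pairMl {F X} d _ _ _.
Arguments ds_actR_unital {F X} d _.
Arguments ds_actL_unital {F X} d _.

Section Tensors.
Variables (F : fieldType) (X : nualg F).
Local Notation "x ** y" := (@nua_mul F X x y) (at level 40, left associativity).
Implicit Types (s t : tens X) (f : X -> X -> F).

Lemma mul_linear_l z : linear (fun x : X => x ** z).
Proof. by move=> k x y; rewrite nua_mulDl. Qed.

Lemma mul_linear_r z : linear (fun x : X => z ** x).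
Proof. by move=> k x y; rewrite nua_mulDr. Qed.

Lemma bilin_form_biscalar f : bilin_form f -> bilinear_for *%R *%R f.
Proof. by move=> f_bil; split=> z k x y; have [] := f_bil k x y z. Qed.

Lemma bilin_form_comp f (g1 g2 : X -> X) :
  bilin_form f -> linear g1 -> linear g2 -> bilin_form (fun a b => f (g1 a) (g2 b)).
Proof.
move=> f_bil g1_lin g2_lin k x y z; rewrite g1_lin g2_lin.
by have [-> _] := f_bil k (g1 x) (g1 y) (g2 z); have [_ ->] := f_bil k (g2 x) (g2 y) (g1 z).
Qed.

Lemma bilin_form_flip f : bilin_form f -> bilin_form (fun a b => f b a).
Proof. by move=> f_bil k x y z; have [] := f_bil k x y z. Qed.

Lemma bilin_form_sum I (r : seq I) (G : I -> X -> X -> F) :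
  (forall i, bilin_form (G i)) -> bilin_form (fun a b => \sum_(i <- r) G i a b).
Proof.
move=> G_bil k x y z; rewrite !mulr_sumr -!big_split.
by split; apply: eq_bigr => i _; have [e1 e2] := G_bil i k x y z; rewrite ?e1 ?e2.
Qed.

Lemma bilin_form_mul (g1 g2 : X -> F) :
  scalar g1 -> scalar g2 -> bilin_form (fun a b => g1 a * g2 b).
Proof.
move=> g1_lin g2_lin k x y z.
by rewrite g1_lin g2_lin mulrDl mulrDr mulrA mulrCA.
Qed.

Lemma big_flatten_map (V : nmodType) I (r : seq I) (G : I -> tens X)
    (phi : X * X -> V) :
  \sum_(p <- flatten [seq G i | i <- r]) phi p = \sum_(i <- r) \sum_(p <- G i) phi p.
Proof. by rewrite big_flatten big_map. Qed.

Lemma big_tmul (V : nmodType) s t (phi : X * X -> V) :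
  \sum_(p <- tmul s t) phi p =
  \sum_(p <- s) \sum_(q <- t) phi (p.1 ** q.1, p.2 ** q.2).
Proof. exact: big_allpairs_dep. Qed.

Lemma teq_sym s t : teq s t -> teq t s.
Proof. by move=> st f f_bil; rewrite st. Qed.

Lemma teq_trans s t u : teq s t -> teq t u -> teq s u.
Proof. by move=> st tu f f_bil; rewrite st // tu. Qed.

Lemma teq_flatten I (r : seq I) (G H : I -> tens X) :
  (forall i, teq (G i) (H i)) ->
  teq (flatten [seq G i | i <- r]) (flatten [seq H i | i <- r]).
Proof.
by move=> GH f f_bil; rewrite !big_flatten_map; apply: eq_bigr => i _; apply: GH.
Qed.

Lemma teq_map (g1 g2 : X -> X) s s' : linear g1 -> linear g2 -> teq s s' ->
  teq [seq (g1 p.1, g2 p.2) | p <- s] [seq (g1 p.1, g2 p.2) | p <- s'].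
Proof.
move=> g1_lin g2_lin ss' f f_bil; rewrite !big_map.
exact: (ss' _ (bilin_form_comp f_bil g1_lin g2_lin)).
Qed.

Lemma teq_tflip s s' : teq s s' -> teq (tflip s) (tflip s').
Proof.
by move=> ss' f f_bil; rewrite !big_map; apply: (ss' _ (bilin_form_flip f_bil)).
Qed.

Lemma tflipK : involutive (@tflip F X).
Proof. by move=> s; rewrite /tflip -map_comp map_id_in // => -[]. Qed.

Lemma teq_tmull s s' t : teq s s' -> teq (tmul s t) (tmul s' t).
Proof.
move=> ss' f f_bil; rewrite !big_tmul.
apply: (ss' (fun a b => \sum_(q <- t) f (a ** q.1) (b ** q.2))).
apply: bilin_form_sum => q.
exact: (bilin_form_comp f_bil (mul_linear_l _) (mul_linear_l _)).
Qed.

Lemma teq_tmulr s t t' : teq t t' -> teq (tmul s t) (tmul s t').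
Proof.
move=> tt' f f_bil; rewrite !big_tmul; apply: eq_bigr => p _.
exact: (tt' _ (bilin_form_comp f_bil (mul_linear_r _) (mul_linear_r _))).
Qed.

Lemma tmul_flattenl I (r : seq I) (G : I -> tens X) t :
  teq (tmul (flatten [seq G i | i <- r]) t) (flatten [seq tmul (G i) t | i <- r]).
Proof.
move=> f f_bil; rewrite big_tmul !big_flatten_map.
by apply: eq_bigr => i _; rewrite big_tmul.
Qed.

Lemma tmul_flattenr I (r : seq I) (G : I -> tens X) t :
  teq (tmul t (flatten [seq G i | i <- r])) (flatten [seq tmul t (G i) | i <- r]).
Proof.
move=> f f_bil; rewrite big_tmul big_flatten_map.
under eq_bigr => p _ do rewrite big_flatten_map.
by rewrite exchange_big; apply: eq_bigr => i _; rewrite big_tmul.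
Qed.

Lemma tflip_tmul s t : teq (tflip (tmul s t)) (tmul (tflip s) (tflip t)).
Proof.
move=> f f_bil; rewrite big_map !big_tmul big_map.
by apply: eq_bigr => p _; rewrite big_map.
Qed.

Lemma tmul_map (g1 g2 h1 h2 : X -> X) s t :
  (forall u v, g1 u ** v = u ** h1 v) -> (forall u v, g2 u ** v = u ** h2 v) ->
  tmul [seq (g1 p.1, g2 p.2) | p <- s] t = tmul s [seq (h1 q.1, h2 q.2) | q <- t].
Proof.
move=> gh1 gh2; rewrite /tmul allpairs_mapl allpairs_mapr.
by apply: eq_allpairs => p q /=; rewrite gh1 gh2.
Qed.

Lemma map_tmul (g1 g2 : X -> X) s t :
  (forall u v, g1 (u ** v) = g1 u ** v) -> (forall u v, g2 (u ** v) = g2 u ** v) ->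
  [seq (g1 p.1, g2 p.2) | p <- tmul s t] = tmul [seq (g1 p.1, g2 p.2) | p <- s] t.
Proof.
move=> g1M g2M; rewrite /tmul map_allpairs allpairs_mapl.
by apply: eq_allpairs => p q /=; rewrite g1M g2M.
Qed.

Lemma teq_bilinear_sum (V W : lmodType F) (pr : V -> W -> F)
    (Phi : X -> X -> V) s s' :
  (forall w, scalar (pr ^~ w)) -> (forall v, (forall w, pr v w = 0) -> v = 0) ->
  (forall z, linear (Phi ^~ z)) -> (forall z, linear (Phi z)) ->
  teq s s' -> \sum_(p <- s) Phi p.1 p.2 = \sum_(p <- s') Phi p.1 p.2.
Proof.
move=> pr_lin pr_sep Phi_l Phi_r ss'; apply: subr0_eq.
apply: pr_sep => w; rewrite (scalB (pr_lin w)) !(scal_sum (pr_lin w)).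
apply/eqP; rewrite subr_eq0; apply/eqP.
apply: (ss' (fun a b => pr (Phi a b) w)) => k x y z.
by rewrite Phi_l (Phi_r z) !pr_lin.
Qed.

Section Cancellation.
Variable N : dual_space X.
Local Notation pr := (ds_pair N).

Lemma teq_of_pairing s s' :
  (forall w1 w2, \sum_(p <- s) pr p.1 w1 * pr p.2 w2 =
                 \sum_(p <- s') pr p.1 w1 * pr p.2 w2) ->
  teq s s'.
Proof.
move=> ss' f f_bil; apply: subr0_eq.
pose t := s ++ [seq (- p.1, p.2) | p <- s'].
have sum_t (V : lmodType F) (g : X -> X -> V) : (forall z, linear (g ^~ z)) ->
    \sum_(p <- t) g p.1 p.2 = \sum_(p <- s) g p.1 p.2 - \sum_(p <- s') g p.1 p.2.
  move=> g_lin; rewrite big_cat big_map -sumrN; congr (_ + _).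
  by apply: eq_bigr => p _; apply: (linN (g_lin _)).
have [f_l _] := bilin_form_biscalar f_bil.
rewrite -(sum_t F^o f f_l).
apply: (bilinear_sum_eq0 (ds_pair_linl N) (ds_pair_sep N) _ (bilin_form_biscalar f_bil)).
move=> w; apply: (ds_pair_sep N) => w2; rewrite (scal_sum (ds_pair_linl N w2)).
under eq_bigr => p _ do rewrite (scalZ (ds_pair_linl N w2)).
rewrite (sum_t F^o (fun u v => pr u w * pr v w2)) ?ss' ?subrr // => z k x y.
by rewrite /= (ds_pair_linl N w) mulrDl -mulrA.
Qed.

Lemma teq_of_act (act : X -> ds_car N -> ds_car N) (op : X -> X -> X) s s' :
  (forall x y w, pr (op x y) w = pr x (act y w)) ->
  (forall w, exists r : seq (X * ds_car N), w = \sum_(q <- r) act q.1 q.2) ->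
  (forall y1 y2, teq [seq (op p.1 y1, op p.2 y2) | p <- s]
                     [seq (op p.1 y1, op p.2 y2) | p <- s']) ->
  teq s s'.
Proof.
move=> pr_act act_unital ss'; apply: teq_of_pairing => w1 w2.
have [r1 ->] := act_unital w1; have [r2 ->] := act_unital w2.
have expand t : \sum_(p <- t) pr p.1 (\sum_(q <- r1) act q.1 q.2) *
                               pr p.2 (\sum_(q <- r2) act q.1 q.2) =
    \sum_(q1 <- r1) \sum_(q2 <- r2)
      \sum_(p <- [seq (op p.1 q1.1, op p.2 q2.1) | p <- t]) pr p.1 q1.2 * pr p.2 q2.2.
  under eq_bigr => p _ do
    rewrite (scal_sum (ds_pair_linr N p.1)) (scal_sum (ds_pair_linr N p.2)) big_distrlr.
  rewrite exchange_big; apply: eq_bigr => q1 _; rewrite exchange_big.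
  by apply: eq_bigr => q2 _; rewrite big_map; apply: eq_bigr => p _; rewrite !pr_act.
rewrite !expand; apply: eq_bigr => q1 _; apply: eq_bigr => q2 _.
exact: (ss' q1.1 q2.1 _ (bilin_form_mul (ds_pair_linl N q1.2) (ds_pair_linl N q2.2))).
Qed.

Lemma teq_tmul_cancelr s s' : (forall x, teq (tmul s x) (tmul s' x)) -> teq s s'.
Proof.
move=> ss'; apply: (teq_of_act (ds_pairMr N) (ds_actR_unital N)) => y1 y2.
by have := ss' [:: (y1, y2)]; rewrite /tmul !allpairs1r.
Qed.

Lemma teq_tmul_cancell s s' : (forall x, teq (tmul x s) (tmul x s')) -> teq s s'.
Proof.
move=> ss'; apply: (teq_of_act (op := fun x y => y ** x) (ds_pairMl N) (ds_actL_unital N)).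
by move=> y1 y2; have := ss' [:: (y1, y2)]; rewrite /tmul !allpairs1l.
Qed.

End Cancellation.
End Tensors.

Section HopfIdentities.
Variables (F : fieldType) (X : rmha F) (N : dual_space X).
Local Notation "x ** y" := (@nua_mul F X x y) (at level 40, left associativity).
Local Notation D := (@Delta F X).
Local Notation S := (@antipode F X).
Local Notation eps := (@counit F X).
Local Notation teq_sum := (teq_bilinear_sum (ds_pair_linl N) (ds_pair_sep N)).
Implicit Types s t : tens X.

Lemma antipode_linear : linear S.
Proof. by case: (rmha_antipode X). Qed.

Lemma counit_scalar : scalar eps.
Proof. by case: (rmha_counit X). Qed.

Lemma counitM x y : eps (x ** y) = eps x * eps y.
Proof. by case: (rmha_counit X). Qed.

Lemma teq_Delta a y y' : teq y y' -> teq (ml2 (D a) y) (ml2 (D a) y').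
Proof.
have [D_mult _ _] := rmha_hom X.
move=> yy'; apply: (teq_tmul_cancell N) => x.
apply: teq_trans (D_mult a x y) _; apply: teq_trans (teq_sym (D_mult a x y')).
exact: teq_tmulr.
Qed.

Lemma Delta_flatten a I (r : seq I) (G : I -> tens X) :
  teq (ml2 (D a) (flatten [seq G i | i <- r]))
      (flatten [seq ml2 (D a) (G i) | i <- r]).
Proof.
have [D_mult _ _] := rmha_hom X.
apply: (teq_tmul_cancell N) => x; apply: teq_trans (D_mult a x _) _.
apply: teq_trans (tmul_flattenr _ _ _) _; apply: teq_trans (teq_sym (tmul_flattenr _ _ _)).
by apply: teq_flatten => i; apply: teq_sym; apply: D_mult.
Qed.

Lemma teq_msum I (r : seq I) (M : I -> mult2 X) (T : I -> tens X) t :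
  meq2 (msum [seq M i | i <- r]) (melt t) -> (forall i, meq2 (M i) (melt (T i))) ->
  teq (flatten [seq T i | i <- r]) t.
Proof.
move=> Mt MT; apply: (teq_tmul_cancelr N) => x.
apply: teq_trans (tmul_flattenl _ _ _) _; apply: teq_trans (proj1 (Mt x)).
rewrite /= -map_comp; apply: teq_flatten => i; exact: teq_sym (proj1 (MT i x)).
Qed.

Definition tensor_of (m : mult2 X) : tens X :=
  epsilon (inhabits [::]) (fun t => meq2 m (melt t)).

Lemma tensor_ofP m : in_tens m -> meq2 m (melt (tensor_of m)).
Proof. exact: (epsilon_spec (inhabits [::]) (fun t => meq2 m (melt t))). Qed.

Definition Delta_m1x a b := tensor_of (mcomp (D a) (m1x b)).
Definition mx1_Delta a b := tensor_of (mcomp (mx1 a) (D b)).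
(* The axioms only put (z (x) 1)Delta^op(a) in A (x) A; (1 (x) z)Delta(a) is
   its flip. *)
Definition m1x_Delta z a := tflip (tensor_of (mcomp (mx1 z) (mflip (D a)))).

Lemma Delta_m1xP a b : meq2 (mcomp (D a) (m1x b)) (melt (Delta_m1x a b)).
Proof. by apply: tensor_ofP; case: (rmha_cond X). Qed.

Lemma mx1_DeltaP a b : meq2 (mcomp (mx1 a) (D b)) (melt (mx1_Delta a b)).
Proof. by apply: tensor_ofP; case: (rmha_cond X). Qed.

Lemma m1x_DeltaP z a : meq2 (mcomp (m1x z) (D a)) (melt (m1x_Delta z a)).
Proof.
have [_ in_op _ _] := rmha_cond_op X; have := tensor_ofP (in_op z a).
rewrite /m1x_Delta; move: (tensor_of _) => t Mt x.
have [lx rx] := Mt (tflip x).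
by split; [move: lx | move: rx] => /teq_tflip/teq_trans/(_ (tflip_tmul _ _));
  rewrite /= !tflipK /tflip -!map_comp.
Qed.

Lemma counit_Delta_m1x a b : \sum_(p <- Delta_m1x a b) eps p.1 *: p.2 = a ** b.
Proof. by case: (rmha_counit X) => _ _ + _; apply; apply: Delta_m1xP. Qed.

Lemma antipode_Delta_m1x a b : \sum_(p <- Delta_m1x a b) S p.1 ** p.2 = eps a *: b.
Proof. by case: (rmha_antipode X) => _ + _; apply; apply: Delta_m1xP. Qed.

Lemma antipode_mx1_Delta a b : \sum_(p <- mx1_Delta b a) p.1 ** S p.2 = eps a *: b.
Proof. by case: (rmha_antipode X) => _ _; apply; apply: mx1_DeltaP. Qed.

Lemma Delta_m1x_span t : exists r : seq (X * X),
  teq (flatten [seq Delta_m1x p.1 p.2 | p <- r]) t.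
Proof.
have [_ _ [_ onto] _] := rmha_cond X; have [r Tr] := onto t.
by exists r; apply: (teq_msum Tr) => p; apply: Delta_m1xP.
Qed.

Lemma m1x_Delta_span t : exists r : seq (X * X),
  teq (flatten [seq m1x_Delta p.1 p.2 | p <- r]) t.
Proof.
have [_ in_op _ [_ onto]] := rmha_cond_op X; have [r Tr] := onto (tflip t).
exists r; have := teq_tflip (teq_msum Tr (fun p => tensor_ofP (in_op p.1 p.2))).
by rewrite tflipK /tflip map_flatten -map_comp.
Qed.

Lemma antipode_mul_linear z : linear (fun u => S u ** z).
Proof. exact: (linear_comp (mul_linear_l z) antipode_linear). Qed.

Lemma mul_antipode_linear z : linear (fun u => z ** S u).
Proof. exact: (linear_comp (mul_linear_r z) antipode_linear). Qed.


Lemma Delta_m1x_mul a y d r :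
  teq (flatten [seq Delta_m1x p.1 p.2 | p <- r]) [:: (y, d)] ->
  teq [seq (u.1 ** y, u.2) | u <- Delta_m1x a d]
      (flatten [seq Delta_m1x (a ** p.1) p.2 | p <- r]).
Proof.
move=> span_yd; apply: (teq_tmul_cancelr N) => x.
have [_ _ DM] := rmha_hom X.
have Delta_mul p : teq (ml2 (D a) (tmul (Delta_m1x p.1 p.2) x))
                       (tmul (Delta_m1x (a ** p.1) p.2) x).
  apply: teq_trans (teq_Delta a (teq_sym (proj1 (Delta_m1xP p.1 p.2 x)))) _.
  exact: teq_trans (teq_sym (proj1 (DM a p.1 _))) (proj1 (Delta_m1xP _ _ x)).
rewrite (tmul_map (g1 := fun u => u ** y) (g2 := id) (h1 := fun v => y ** v) (h2 := id))
    => [|u v|//]; last by rewrite nua_mulA.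
apply: teq_trans (teq_sym (proj1 (Delta_m1xP a d _))) _.
have -> : ml2 (mcomp (D a) (m1x d)) [seq (y ** q.1, id q.2) | q <- x] =
          ml2 (D a) (tmul [:: (y, d)] x).
  by rewrite /= /tmul allpairs1l -map_comp.
apply: teq_trans (teq_Delta a (teq_tmull x (teq_sym span_yd))) _.
apply: teq_trans (teq_Delta a (tmul_flattenl _ _ _)) _.
apply: teq_trans (Delta_flatten _ _ _) _.
exact: teq_trans (teq_flatten _ Delta_mul) (teq_sym (tmul_flattenl _ _ _)).
Qed.

Lemma antipode_Delta_m1x_mul a y d :
  \sum_(u <- Delta_m1x a d) S (u.1 ** y) ** u.2 = eps a *: (S y ** d).
Proof.
have [r span_yd] := Delta_m1x_span [:: (y, d)].
have Sd : S y ** d = \sum_(p <- r) eps p.1 *: p.2.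
  have := teq_sum antipode_mul_linear (fun z => mul_linear_r (S z)) (teq_sym span_yd).
  rewrite big_seq1 big_flatten_map => ->.
  by apply: eq_bigr => p _; apply: antipode_Delta_m1x.
have := teq_sum antipode_mul_linear (fun z => mul_linear_r (S z)) (Delta_m1x_mul a span_yd).
rewrite big_map big_flatten_map => ->.
rewrite Sd scaler_sumr; apply: eq_bigr => p _.
by rewrite antipode_Delta_m1x counitM scalerA.
Qed.

Lemma antipodeM x y : S (x ** y) = S y ** S x.
Proof.
apply: subr0_eq; apply: (@nua_ndr F X) => w.
rewrite (linB (mul_linear_l w)) -nua_mulA.
have [r span_xw] := Delta_m1x_span [:: (x, w)].
have Sy_l z : linear (fun u => S (u ** y) ** z).
  exact: (linear_comp (antipode_mul_linear z) (mul_linear_l y)).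
have := teq_sum Sy_l (fun z => mul_linear_r (S (z ** y))) (teq_sym span_xw).
rewrite big_seq1 big_flatten_map /= => ->.
have := teq_sum antipode_mul_linear (fun z => mul_linear_r (S z)) (teq_sym span_xw).
rewrite big_seq1 big_flatten_map /= => ->.
rewrite (lin_sum (mul_linear_r (S y))) -sumrB big1 // => p _.
by rewrite antipode_Delta_m1x_mul antipode_Delta_m1x (linZ (mul_linear_r _)) subrr.
Qed.

Lemma m1x_Delta_mx1 y z a :
  teq [seq (y ** p.1, p.2) | p <- m1x_Delta z a]
      [seq (p.1, z ** p.2) | p <- mx1_Delta y a].
Proof.
apply: (teq_tmul_cancelr N) => x.
rewrite -(map_tmul (g1 := fun u => y ** u) (g2 := id)) => [|u v|//]; last by rewrite nua_mulA.
rewrite -(map_tmul (g1 := id) (g2 := fun u => z ** u)) => [|//|u v]; last by rewrite nua_mulA.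
apply: teq_trans (teq_map (g2 := id) (mul_linear_r y) (fun _ _ _ => erefl)
  (teq_sym (proj1 (m1x_DeltaP z a x)))) _.
apply: teq_trans (teq_map (g1 := id) (fun _ _ _ => erefl) (mul_linear_r z)
  (proj1 (mx1_DeltaP y a x))).
by rewrite /= -!map_comp.
Qed.

Lemma antipode_m1x_Delta z a : \sum_(q <- m1x_Delta z a) q.1 ** S q.2 = eps a *: S z.
Proof.
apply: subr0_eq; apply: (@nua_ndl F X) => y.
rewrite (linB (mul_linear_r y)) (lin_sum (mul_linear_r y)) (linZ (mul_linear_r y)).
apply/eqP; rewrite subr_eq0; apply/eqP.
transitivity (\sum_(p <- [seq (y ** p.1, p.2) | p <- m1x_Delta z a]) p.1 ** S p.2).
  by rewrite [RHS]big_map; apply: eq_bigr => p _; rewrite nua_mulA.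
rewrite (teq_sum (fun w => mul_linear_l (S w)) mul_antipode_linear (m1x_Delta_mx1 y z a)).
rewrite big_map /=.
transitivity ((\sum_(p <- mx1_Delta y a) p.1 ** S p.2) ** S z).
  by rewrite (lin_sum (mul_linear_l (S z))); apply: eq_bigr => p _; rewrite antipodeM nua_mulA.
by rewrite antipode_mx1_Delta (linZ (mul_linear_l _)).
Qed.

Lemma mx1_Delta_m1x c x d :
  teq [seq (p.1, p.2 ** d) | p <- mx1_Delta c x]
      [seq (c ** p.1, p.2) | p <- Delta_m1x x d].
Proof.
apply: (teq_tmul_cancelr N) => y.
rewrite (tmul_map (g1 := id) (g2 := fun u => u ** d) (h1 := id) (h2 := fun v => d ** v))
  => [|//|u v]; last by rewrite nua_mulA.
rewrite -(map_tmul (g1 := fun u => c ** u) (g2 := id)) => [|u v|//]; last by rewrite nua_mulA.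
exact: teq_trans (teq_sym (proj1 (mx1_DeltaP c x _)))
  (teq_map (g2 := id) (mul_linear_r c) (fun _ _ _ => erefl) (proj1 (Delta_m1xP x d y))).
Qed.

Lemma counit_mx1_Delta c x : \sum_(p <- mx1_Delta c x) eps p.1 *: p.2 = eps c *: x.
Proof.
apply: subr0_eq; apply: (@nua_ndr F X) => d.
rewrite (linB (mul_linear_l d)) (lin_sum (mul_linear_l d)) (linZ (mul_linear_l d)).
apply/eqP; rewrite subr_eq0; apply/eqP.
transitivity (\sum_(p <- [seq (p.1, p.2 ** d) | p <- mx1_Delta c x]) eps p.1 *: p.2).
  by rewrite big_map; apply: eq_bigr => p _; rewrite (linZ (mul_linear_l _)).
rewrite (teq_sum (fun z => scalar_scale_linear z counit_scalar)
  (fun u => scaler_linear (eps u)) (mx1_Delta_m1x c x d)) big_map.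
transitivity (eps c *: \sum_(p <- Delta_m1x x d) eps p.1 *: p.2).
  by rewrite scaler_sumr; apply: eq_bigr => p _; rewrite counitM scalerA.
by rewrite counit_Delta_m1x.
Qed.

Lemma counit_eq1_or_trivial : (exists c, eps c = 1) \/ (forall x : X, x = 0).
Proof.
case: (classic (exists c, eps c != 0)) => [[c c_neq0]|counit0].
  by left; exists ((eps c)^-1 *: c); rewrite (scalZ counit_scalar) mulVf.
right=> x; apply: (@nua_ndr F X) => d; rewrite -counit_Delta_m1x big1 // => p _.
by case: (eqVneq (eps p.1) 0) => [->|?]; [rewrite scale0r | case: counit0; exists p.1].
Qed.

End HopfIdentities.

Section Multipliers.
Variables (F : fieldType) (X : nualg F) (n : mult X).

Lemma mL_linear : linear (mL n).
Proof.
move=> k x y; apply: subr0_eq; apply: (@nua_ndl F X) => z.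
by rewrite (linB (mul_linear_r z)) mLR !nua_mulDr !mLR subrr.
Qed.

Lemma mult_mR_scalar (c : F) :
  (forall y, mL n y = c *: y) -> forall y, mR n y = c *: y.
Proof.
move=> mL_c y; apply: subr0_eq; apply: (@nua_ndr F X) => z.
by rewrite (linB (mul_linear_l z)) -mLR mL_c (linZ (mul_linear_r _)) (linZ (mul_linear_l _)) subrr.
Qed.

End Multipliers.

Section FixedPoints.
Variables (F : fieldType) (A B : rmha F) (P : dual_pair A B).
Local Notation "x ** y" := (nua_mul x y) (at level 40, left associativity).
Local Notation pa := (pairing P).
Local Notation act := (actAB P).
Local Notation SA := (@antipode F A).
Local Notation SA_inv := (@antipode_inv F A).
Local Notation epsA := (@counit F A).
Local Notation epsB := (@counit F B).

Lemma pairing_linl b : scalar (pa ^~ b).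
Proof. by move=> k x y; case: (dp_bilin P k x y b b). Qed.

Lemma pairing_linr a : scalar (pa a).
Proof. by move=> k x y; case: (dp_bilin P k a a x y). Qed.

Definition dual_space_A : dual_space A.
Proof.
refine (@DualSpace F A B pa act (fun a b => actBA' P b a)
  pairing_linl pairing_linr (@dp_nondeg_l _ _ _ P) _ _ _ _).
- by move=> x x' w; case: (dp_adj P x' x w w).
- by move=> x x' w; case: (dp_adj P x' x w w).
- by case: (dp_unital P).
- move=> w; have [_ _ _ unital] := dp_unital P; have [s ->] := unital w.
  by exists [seq (p.2, p.1) | p <- s]; rewrite big_map.
Defined.

Definition dual_space_B : dual_space B.
Proof.
refine (@DualSpace F B A (fun b a => pa a b) (fun b a => actBA P b a)
  (fun b a => actAB' P a b) pairing_linr pairing_linl (@dp_nondeg_r _ _ _ P) _ _ _ _).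
- by move=> x x' w /=; case: (dp_adj P w w x' x).
- by move=> x x' w /=; case: (dp_adj P w w x' x).
- by case: (dp_unital P).
- move=> w; have [_ unital _ _] := dp_unital P; have [s ->] := unital w.
  by exists [seq (p.2, p.1) | p <- s]; rewrite big_map.
Defined.

Lemma pairing_injr (x y : B) : (forall a, pa a x = pa a y) -> x = y.
Proof.
move=> xy; apply: subr0_eq; apply: (@dp_nondeg_r _ _ _ P) => a.
by rewrite (scalB (pairing_linr a)) xy subrr.
Qed.

Lemma pairing_actAB a' a b : pa a' (act a b) = pa (a' ** a) b.
Proof. by case: (dp_adj P a a' b b). Qed.

Lemma actAB_linl b : linear (act ^~ b).
Proof.
move=> k x y; apply: pairing_injr => a'.
by rewrite pairing_actAB nua_mulDr pairing_linl (pairing_linr a') !pairing_actAB.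
Qed.

Lemma actAB_linr a : linear (act a).
Proof.
move=> k x y; apply: pairing_injr => a'.
by rewrite pairing_actAB pairing_linr (pairing_linr a') !pairing_actAB.
Qed.

Lemma actABM u v b : act (u ** v) b = act u (act v b).
Proof. by apply: pairing_injr => a'; rewrite !pairing_actAB nua_mulA. Qed.

Variable m : mult B.
Hypothesis m_fixed : fixed_point P m.

Lemma fixed_point_act_antipode u w b :
  mL m (act (u ** SA w) b) = act u (mL m (act (SA w) b)).
Proof.
have [r span_uw] := m1x_Delta_span dual_space_A [:: (u, w)].
have fixed_at p : epsA p.2 *: mL m (act (SA p.1) b) =
    \sum_(q <- m1x_Delta p.1 p.2) act q.1 (mL m (act (SA q.2) b)).
  have := (m_fixed p.2).1 [:: (SA p.1, b)] (fun c => m1x_Delta (SA_inv c) p.2).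
  rewrite !big_seq1 /= rmha_SK; apply=> // c; exact: m1x_DeltaP.
have Phi_r z : linear (fun w => act z (mL m (act (SA w) b))).
  apply: (linear_comp (actAB_linr z)); apply: (linear_comp (mL_linear m)).
  exact: (linear_comp (actAB_linl b) (@antipode_linear F A)).
have sum_m : \sum_(p <- r) epsA p.2 *: mL m (act (SA p.1) b) =
    act u (mL m (act (SA w) b)).
  under eq_bigr do rewrite fixed_at.
  rewrite -big_flatten_map (teq_bilinear_sum pairing_linr (@dp_nondeg_r _ _ _ P)
    (fun z => actAB_linl _) Phi_r span_uw).
  by rewrite big_seq1.
have sum_S : \sum_(p <- r) epsA p.2 *: SA p.1 = u ** SA w.
  under eq_bigr do rewrite -(antipode_m1x_Delta dual_space_A).
  rewrite -big_flatten_map (teq_bilinear_sum pairing_linl (@dp_nondeg_l _ _ _ P)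
    (fun z => mul_linear_l _) (@mul_antipode_linear _ _) span_uw).
  by rewrite big_seq1.
rewrite -sum_m -sum_S (lin_sum (actAB_linl b)) (lin_sum (mL_linear m)).
by apply: eq_bigr => p _; rewrite (linZ (actAB_linl _)) (linZ (mL_linear m)).
Qed.

Lemma fixed_point_act u y : mL m (act u y) = act u (mL m y).
Proof.
have [_ _ unital _] := dp_unital P; have [s ->] := unital y.
rewrite (lin_sum (actAB_linr u)) !(lin_sum (mL_linear m)) (lin_sum (actAB_linr u)).
apply: eq_bigr => p _.
by have := fixed_point_act_antipode u (SA_inv p.1) p.2; rewrite rmha_KS actABM.
Qed.

Lemma fixed_point_mL c : epsB c = 1 -> forall y, mL m y = epsB (mL m c) *: y.
Proof.
move=> c1 y.
have counit_mR x : epsB (mR m x) = epsB (mL m c) * epsB x.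
  by have := congr1 epsB (mLR m x c); rewrite !counitM c1 mulr1 => <-; apply: mulrC.
have pairing_counit a T : pa a (\sum_(p <- T) epsB p.1 *: p.2) =
                          epsB (\sum_(p <- T) pa a p.2 *: p.1).
  rewrite (scal_sum (pairing_linr a)) (scal_sum (@counit_scalar _ B)).
  by apply: eq_bigr => p _; rewrite (scalZ (pairing_linr a)) (scalZ (@counit_scalar _ B)) mulrC.
have := counit_mx1_Delta dual_space_B c (mL m y); rewrite c1 scale1r => <-.
have := counit_mx1_Delta dual_space_B (mR m c) y; rewrite counit_mR c1 mulr1 => <-.
apply: pairing_injr => a; rewrite !pairing_counit.
rewrite -(proj2 (dp_actAB P a _ _ _) (mx1_DeltaP c (mL m y))).
rewrite -(proj2 (dp_actAB P a _ _ _) (mx1_DeltaP (mR m c) y)).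
by rewrite -fixed_point_act mLR.
Qed.

End FixedPoints.

Theorem proposition6p5 (R : realType) (A B : rmha R[i]) (P : dual_pair A B)
  (m : mult B) :
  fixed_point P m ->
  exists c : R[i], forall b : B, mL m b = c *: b /\ mR m b = c *: b.
Proof.
move=> m_fixed; have [[c c1] | B0] := counit_eq1_or_trivial B.
  have mL_scalar := fixed_point_mL m_fixed c1.
  by exists (counit (mL m c)) => b; split; [|apply: mult_mR_scalar].
by exists 0 => b; rewrite scale0r; split; apply: B0.
Qed.
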